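(* Let $L\ge1$ be an integer and $g$ a real polynomial of degree at most $L$ with $g(0)=g'(0)=0$. Let $a<0<b$ and suppose $|g(x)|\le|x|$ for all $x\in[a,b]$. Then \[ |g(x)|\le \frac{8L^2}{b-a}x^2\quad\text{for all } x\in[a/4,b/4]\text{ with } |x|\le\frac{3(b-a)}{L^2}, \] and \[ |g(x)|\le \frac{4L}{\sqrt{|ab|}}x^2\quad\text{for all } x\in[a/4,b/4]\text{ with } |x|\le\frac{\sqrt{|ab|}}{4L}. \] *)

From mathcomp Require Import all_boot all_order all_algebra.
From mathcomp Require Import reals.

From mathcomp Require Import all_boot all_order all_algebra.
From mathcomp Require Import reals trigo polyrcf.
From mathcomp Require Import zify ring lra.
Import Order.TTheory GRing.Theory Num.Theory.
Local Open Scope ring_scope.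
Set Implicit Arguments.
Unset Strict Implicit.
Unset Printing Implicit Defensive.

(* Write g = x h, so that h(0) = 0 and |h| <= 1 on [a, b]; by symmetry and the mean
   value theorem it suffices to bound |h'(c)| for 0 <= c <= b/4.  Markov's inequality
   |q'(1)| <= n^2 sup_[-1,1] |q|, rescaled to [c, b] (if -a <= b) or to [a, c], both of
   length at least 3(b - a)/8, gives |h'(c)| <= 8 L^2/(b - a).  With e the endpoint of
   larger modulus, the parabola t |-> c + (sqrt|ab|/2) t + (e/8) t^2 maps [-1, 1] into
   [a, b], so Schur's inequality |q'(0)| <= 2m + 1 for deg q <= 2m + 1 gives
   |h'(c)| <= 4 L/sqrt|ab|.  Both inequalities follow by Lagrange interpolation at the
   extremal points cos(j pi/N) of the Chebyshev polynomial T_N: T_N alternates in sign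
   there, and so do the relevant values of the Lagrange basis. *)

Lemma nat_ind2 (P : nat -> Prop) : P 0%N -> P 1%N ->
  (forall n, P n -> P n.+1 -> P n.+2) -> forall n, P n.
Proof.
move=> P0 P1 PS n; suff : P n /\ P n.+1 by case.
by elim: n => [|n [h1 h2]]; split => //; exact: PS.
Qed.

Lemma card_ord_ltn n (i : 'I_n) : #|[pred j : 'I_n | (j < i)%N]| = i.
Proof.
rewrite -sum1_card.
have := @big_ord_narrow_cond _ 0%N addn _ _ xpredT (fun _ => 1%N) (ltnW (ltn_ord i)).
by rewrite /= sum1_card => ->; rewrite big_const_ord iter_addn_0 mul1n.
Qed.

Section PolyFacts.
Variable R : comNzRingType.

Lemma scalar_horner (z : R) : scalar (fun q : {poly R} => q.[z]).
Proof. by move=> c p q; rewrite hornerD hornerZ. Qed.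

Lemma scalar_deriv_horner (z : R) : scalar (fun q : {poly R} => q^`().[z]).
Proof. by move=> c p q; rewrite derivD derivZ hornerD hornerZ. Qed.

Lemma horner_comp_deriv (h q : {poly R}) x :
  (h \Po q)^`().[x] = h^`().[q.[x]] * q^`().[x].
Proof. by rewrite deriv_comp hornerM horner_comp. Qed.

Lemma size_comp_poly_le (p q : {poly R}) m k :
  (size p <= m.+1)%N -> (size q <= k.+1)%N -> (size (p \Po q) <= (m * k).+1)%N.
Proof.
move=> sp sq; apply: leq_trans (size_comp_poly_leq p q) _.
by rewrite ltnS leq_mul //; lia.
Qed.

Lemma horner_drop_poly1 (p : {poly R}) x :
  p.[x] = p.[0] + (drop_poly 1 p).[x] * x.
Proof.
rewrite -{1}(poly_take_drop 1 p) hornerD hornerM hornerXn expr1; congr (_ + _).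
have -> : take_poly 1 p = (p`_0)%:P.
  by apply/polyP => -[|i]; rewrite coef_take_poly coefC.
by rewrite hornerC horner_coef0.
Qed.

Lemma odd_poly_hornerE (q : {poly R}) y :
  q.[y] - q.[- y] = (odd_poly q).[y ^+ 2] * y *+ 2.
Proof.
have E z : q.[z] = (even_poly q).[z ^+ 2] + (odd_poly q).[z ^+ 2] * z.
  by rewrite -{1}(poly_even_odd q) hornerD hornerM hornerX !horner_comp hornerXn.
by rewrite !E sqrrN; ring.
Qed.

Lemma deriv0_odd_poly (q : {poly R}) : q^`().[0] = (odd_poly q).[0].
Proof. by rewrite !horner_coef0 coef_deriv coef_odd_poly mulr1n. Qed.

Lemma size_odd_poly_le k (q : {poly R}) :
  (size q <= k.*2.+2)%N -> (size (odd_poly q) <= k.+1)%N.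
Proof.
move=> /half_leq sq; apply: leq_trans (size_odd_poly _) _.
by rewrite /= doubleK in sq.
Qed.

End PolyFacts.

Section SignedProducts.
Variable R : realDomainType.

Lemma prodr_sgn_norm (I : finType) (P : pred I) (F : I -> R) :
  \prod_(j | P j) F j = (-1) ^+ #|[pred j | P j & F j < 0]| * \prod_(j | P j) `|F j|.
Proof.
rewrite -prodr_const big_mkcondr /= -big_split /=; apply: eq_bigr => j _.
by case: ltrP => [/ltr0_norm|/ger0_norm] ->; rewrite ?mulN1r ?opprK ?mul1r.
Qed.

End SignedProducts.

Section Nodes.
Variable R : realDomainType.

(* The Lagrange basis of qpoly needs nodes injective on all of nat, although only
   the first m + 1 of them are used. *)
Definition extend_nodes (s : nat -> R) m j :=
  if (j <= m)%N then s j else s m - (j - m)%:R.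

Lemma extend_nodesE s m j : (j <= m)%N -> extend_nodes s m j = s j.
Proof. by rewrite /extend_nodes => ->. Qed.

Lemma extend_nodes_decr s m : (forall i j, (i < j <= m)%N -> s j < s i) ->
  forall i j, (i < j)%N -> extend_nodes s m j < extend_nodes s m i.
Proof.
move=> s_decr i j ij; rewrite /extend_nodes.
have sm_le i' : (i' <= m)%N -> s m <= s i'.
  by rewrite leq_eqVlt => /predU1P[->//|im]; apply/ltW/s_decr; rewrite im leqnn.
case: (leqP j m) => [jm|mj].
  have -> : (i <= m)%N by apply: ltnW (leq_trans ij jm).
  by apply: s_decr; rewrite ij jm.
case: (leqP i m) => [im|mi].
  by rewrite ltrBlDr (le_lt_trans (sm_le i im)) // ltrDl ltr0n subn_gt0.
by rewrite ltrD2l ltrN2 ltr_nat ltn_sub2r.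
Qed.

End Nodes.

Section LagrangeSigns.
Variables (R : realFieldType) (n : nat) (x : nat -> R).
Hypothesis x_decr : forall i j, (i < j)%N -> x j < x i.
Local Notation ell i := (tnth (lagrange n x) i : {poly R}).

Lemma nodes_ltE i j : (x i < x j) = (j < i)%N.
Proof.
case: (ltngtP i j) => [ij|ji|->]; [exact/lt_gtF/x_decr | exact: x_decr | exact: ltxx].
Qed.

Lemma nodes_le i j : (i <= j)%N -> x j <= x i.
Proof. by rewrite leq_eqVlt => /predU1P[->|/x_decr/ltW]. Qed.

Lemma nodes_inj : injective x.
Proof. by move=> i j eij; case: (ltngtP i j) => // /x_decr; rewrite eij ltxx. Qed.

Lemma lagrange_signE (i : 'I_n) : exists2 c : R, 0 < c &
  ell i = ((-1) ^+ i * c) *: \prod_(j < n | j != i) ('X - (x j)%:P).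
Proof.
have n_gt0 : (0 < n)%N := leq_ltn_trans (leq0n i) (ltn_ord i).
set P := \prod_(j < n | j != i) `|x i - x j|.
have P_gt0 : 0 < P.
  apply: prodr_gt0 => j ji; rewrite normr_gt0 subr_eq0 (inj_eq nodes_inj).
  by rewrite eq_sym.
exists P^-1; first by rewrite invr_gt0.
rewrite lagrangeE //=; last exact: nodes_inj.
rewrite mul_polyC horner_prod.
under eq_bigr => j _ do rewrite hornerXsubC.
rewrite prodr_sgn_norm -/P invfM -exprVn invrN1; congr (_ *: _).
congr (_ ^+ _ * _); rewrite -[RHS]card_ord_ltn; apply: eq_card => j.
rewrite !inE subr_lt0 nodes_ltE; apply/andP/idP => [[]//|ji]; split => //.
by rewrite neq_ltn ji.
Qed.

Lemma lagrange_sign_right (i : 'I_n) z : x 0 <= z ->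
  0 <= (-1) ^+ i * (ell i)^`().[z].
Proof.
move=> x0z; have [c c_gt0 ->] := lagrange_signE i.
set p := \prod_(j < n | j != i) _.
have /andP[p_ge0 p'_ge0] : (0 <= p.[z]) && (0 <= p^`().[z]).
  apply: (big_ind (fun q : {poly R} => (0 <= q.[z]) && (0 <= q^`().[z]))).
  - by rewrite hornerC derivC horner0 ler01 lexx.
  - move=> q r /andP[q_ge0 q'_ge0] /andP[r_ge0 r'_ge0].
    by rewrite derivM hornerD !hornerM !mulr_ge0 ?addr_ge0 ?mulr_ge0.
  - move=> j _; rewrite derivXsubC hornerC hornerXsubC ler01 subr_ge0 andbT.
    exact: le_trans (nodes_le (leq0n j)) x0z.
by rewrite derivZ hornerZ -mulrA signrMK mulr_ge0 // ltW.
Qed.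

Lemma lagrange_sign_left (i : 'I_n) z : z <= x n.-1 ->
  0 <= (-1) ^+ (n.-1 + i) * (ell i).[z].
Proof.
move=> zxn; have [c c_gt0 ->] := lagrange_signE i.
rewrite hornerZ horner_prod.
under eq_bigr => j _ do rewrite hornerXsubC -opprB.
rewrite prodrN cardC1 card_ord exprD -!mulrA signrMK [c * _]mulrCA signrMK.
apply: mulr_ge0; first exact: ltW.
apply: prodr_ge0 => j _; rewrite subr_ge0.
apply: le_trans zxn (nodes_le _).
by rewrite -ltnS prednK // (leq_ltn_trans _ (ltn_ord j)).
Qed.

Lemma scalar_lagrange_bound (Phi : {poly R} -> R) (p r : {poly R}) :
  scalar Phi -> (size p <= n)%N -> (size r <= n)%N ->
  (forall i : 'I_n, `|p.[x i]| <= `|r.[x i]|) ->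
  (forall i : 'I_n, 0 <= r.[x i] * Phi (ell i)) ->
  `|Phi p| <= Phi r.
Proof.
move=> Phi_scalar sp sr p_le_r r_sign.
have Phi0 : Phi 0 = 0.
  have /= := Phi_scalar 1 0 0; rewrite scaler0 addr0 mul1r.
  by move=> /(congr1 (fun y => y - Phi 0)); rewrite subrr addrK.
have PhiZ (a : R) (q : {poly R}) : Phi (a *: q) = a * Phi q.
  by rewrite -[_ *: q]addr0 Phi_scalar /= Phi0 addr0.
have PhiD : {morph Phi : q1 q2 / q1 + q2}.
  by move=> q1 q2; rewrite -{1}[q1]scale1r Phi_scalar /= mul1r.
have [n0|n_gt0] := posnP n.
  by move: sp sr; rewrite n0 !size_poly_leq0 => /eqP-> /eqP->; rewrite Phi0 normr0.
have PhiE (q : {poly R}) :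
    (size q <= n)%N -> Phi q = \sum_(i < n) q.[x i] * Phi (ell i).
  move=> sq; rewrite {1}(lagrange_gen n_gt0 nodes_inj sq) (big_morph Phi PhiD Phi0).
  by apply: eq_bigr => i _; rewrite mul_polyC PhiZ.
rewrite (PhiE p sp) (PhiE r sr); apply: le_trans (ler_norm_sum _ _ _) _.
apply: ler_sum => i _; rewrite -[X in _ <= X]ger0_norm // !normrM.
exact: ler_wpM2r.
Qed.

End LagrangeSigns.

Section Chebyshev.
Context {R : comNzRingType}.

Fixpoint cheb n : {poly R} :=
  match n with
  | 0 => 1
  | 1 => 'X
  | (m.+1 as n1).+1 => cheb n1 * 'X *+ 2 - cheb m
  end.

Lemma chebSS n : cheb n.+2 = cheb n.+1 * 'X *+ 2 - cheb n.
Proof. by []. Qed.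

Lemma size_cheb n : (size (cheb n) <= n.+1)%N.
Proof.
elim/nat_ind2: n => [||n h1 h2]; first by rewrite size_poly1.
  by rewrite /= size_polyX.
rewrite chebSS (leq_trans (size_polyD _ _)) // geq_max size_polyN.
rewrite (leq_trans h1) ?andbT //; last by lia.
rewrite mulr2n (leq_trans (size_polyD _ _)) // geq_max andbb.
apply: leq_trans (size_polyMleq _ _) _; rewrite size_polyX addn2; exact: h2.
Qed.

Lemma horner_chebSS n x : (cheb n.+2).[x] = (cheb n.+1).[x] * x *+ 2 - (cheb n).[x].
Proof. by rewrite chebSS hornerD hornerN hornerMn hornerM hornerX. Qed.

Lemma deriv_chebSS n : (cheb n.+2)^`() =
  ((cheb n.+1)^`() * 'X + cheb n.+1) *+ 2 - (cheb n)^`().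
Proof. by rewrite chebSS derivB derivMn derivM derivX mulr1. Qed.

Lemma cheb1 n : (cheb n).[1] = 1.
Proof.
elim/nat_ind2: n => [||n IHn IHn1]; first by rewrite hornerC.
  by rewrite /= hornerX.
by rewrite horner_chebSS IHn IHn1 mulr1 mulr2n addrK.
Qed.

Lemma deriv_cheb1 n : (cheb n)^`().[1] = n%:R ^+ 2.
Proof.
elim/nat_ind2: n => [||n IHn IHn1]; first by rewrite derivC horner0 expr0n.
  by rewrite /= derivX hornerC expr1n.
rewrite deriv_chebSS hornerD hornerN hornerMn hornerD hornerM hornerX.
rewrite IHn IHn1 cheb1 -!natr1; ring.
Qed.

Lemma cheb_oppr n x : (cheb n).[- x] = (-1) ^+ n * (cheb n).[x].
Proof.
elim/nat_ind2: n => [||n IHn IHn1]; first by rewrite hornerC expr0 mul1r hornerC.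
  by rewrite /= hornerX expr1 mulN1r hornerX.
by rewrite !horner_chebSS IHn IHn1 !exprS; ring.
Qed.

Lemma cheb_odd_oppr k x : (cheb k.*2.+1).[- x] = - (cheb k.*2.+1).[x].
Proof. by rewrite cheb_oppr -signr_odd oddS odd_double expr1 mulN1r. Qed.

Lemma cheb_at0 k : (cheb k.*2).[0] = (-1) ^+ k /\ (cheb k.*2.+1).[0] = 0 /\
  (cheb k.*2.+1)^`().[0] = (-1) ^+ k * (k.*2.+1)%:R.
Proof.
elim: k => [|k [IHe [IHo IHd]]].
  by rewrite /= hornerC hornerX derivX hornerC expr0 mulr1.
have even0 : (cheb k.+1.*2).[0] = (-1) ^+ k.+1.
  by rewrite doubleS horner_chebSS IHe IHo exprS; ring.
split => //; rewrite doubleS; split.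
  by rewrite horner_chebSS IHo -doubleS even0; ring.
rewrite deriv_chebSS hornerD hornerN hornerMn hornerD hornerM hornerX IHd.
by rewrite -doubleS even0 doubleS -[(k.*2).+3]addn2 natrD exprS; ring.
Qed.

End Chebyshev.

Section ChebyshevNodes.
Context {R : realType}.

Lemma cheb_cos n (t : R) : (cheb n).[cos t] = cos (n%:R * t).
Proof.
elim/nat_ind2: n => [||n IHn IHn1]; first by rewrite hornerC mul0r cos0.
  by rewrite /= hornerX mul1r.
have cos_sum a : cos (a + t) = cos a * cos t *+ 2 - cos (a - t).
  by rewrite cosD cosB; ring.
rewrite horner_chebSS IHn IHn1 -[n.+2]addn1 natrD mulrDl mul1r cos_sum.
by rewrite -[n.+1]addn1 natrD mulrDl mul1r addrK.
Qed.

Lemma cos_pimulrn j : cos (pi *+ j) = (-1) ^+ j :> R.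
Proof. by have := alternatingn (@cosDpi R) j 0; rewrite add0r cos0 mulr1. Qed.

Definition cheb_node N j : R := cos (j%:R * pi / N%:R).

Lemma cheb_node0 N : cheb_node N 0 = 1.
Proof. by rewrite /cheb_node mul0r mul0r cos0. Qed.

Lemma cheb_node_decr N i j : (i < j <= N)%N -> cheb_node N j < cheb_node N i.
Proof.
move=> /andP[ij jN]; have N_pos : 0 < N%:R :> R.
  by rewrite ltr0n (leq_trans _ jN) // (leq_ltn_trans _ ij).
have arg_itv k : (k <= N)%N -> (k%:R * pi / N%:R : R) \in `[0, pi].
  move=> kN; rewrite in_itv /= divr_ge0 ?mulr_ge0 ?pi_ge0 ?ler0n //=.
  by rewrite (ler_pdivrMr _ _ N_pos) [_ * pi]mulrC (ler_pM2l (@pi_gt0 R)) ler_nat.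
have iN : (i <= N)%N := ltnW (leq_trans ij jN).
rewrite /cheb_node ltr_cos ?arg_itv // ltr_pM2r ?invr_gt0 //.
by rewrite (ltr_pM2r (@pi_gt0 R)) ltr_nat.
Qed.

Lemma cheb_cheb_node N j : (0 < N)%N -> (cheb N).[cheb_node N j] = (-1) ^+ j.
Proof.
move=> N_gt0; rewrite cheb_cos -cos_pimulrn mulrCA divff ?mulr1 ?mulr_natl //.
by rewrite pnatr_eq0 -lt0n.
Qed.

Lemma cheb_node_gt0 k j : (j <= k)%N -> 0 < cheb_node k.*2.+1 j.
Proof.
move=> jk; apply: cos_gt0_pihalf; have pi_pos := @pi_gt0 R.
have N_pos : 0 < (k.*2.+1)%:R :> R by rewrite ltr0n.
have arg_ge0 : 0 <= (j%:R * pi / (k.*2.+1)%:R : R).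
  by rewrite divr_ge0 ?mulr_ge0 ?ler0n // ltW.
apply/andP; split; first by apply: lt_le_trans arg_ge0; rewrite oppr_lt0 divr_gt0.
rewrite mulrAC mulrC (ltr_pM2l pi_pos) ltr_pdivrMr //.
have : (j.*2 < k.*2.+1)%N by rewrite ltnS leq_double.
by rewrite -(ltr_nat R) -muln2 natrM => ?; lra.
Qed.

End ChebyshevNodes.

Section MarkovSchur.
Variable R : realType.

Lemma markov_deriv1 n (p : {poly R}) : (0 < n)%N -> (size p <= n.+1)%N ->
  (forall u, -1 <= u <= 1 -> `|p.[u]| <= 1) -> `|p^`().[1]| <= n%:R ^+ 2.
Proof.
move=> n_gt0 sp p_le1.
pose x := extend_nodes (cheb_node (R := R) n) n.
have x_decr : forall i j, (i < j)%N -> x j < x i.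
  exact: extend_nodes_decr (@cheb_node_decr R n).
have xE (i : 'I_n.+1) : x i = cheb_node n i := extend_nodesE _ (ltn_ord i : (i <= n)%N).
rewrite -deriv_cheb1.
apply: (scalar_lagrange_bound x_decr (scalar_deriv_horner 1) sp (size_cheb n)) => /= i.
  by rewrite xE cheb_cheb_node // normrX normrN1 expr1n p_le1 // cos_geN1 cos_le1.
rewrite xE cheb_cheb_node //; apply: (lagrange_sign_right x_decr).
by rewrite (xE ord0) cheb_node0.
Qed.

Lemma norm_odd_poly_sqr_le1 (p : {poly R}) y : -1 <= y <= 1 ->
  (forall u, -1 <= u <= 1 -> `|p.[u]| <= 1) -> `|(odd_poly p).[y ^+ 2] * y| <= 1.
Proof.
move=> /andP[y1 y2] p_le1; have := odd_poly_hornerE p y; rewrite mulr2n => oddE.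
have /andP[py1 py2] : -1 <= p.[y] <= 1 by rewrite -ler_norml p_le1 ?y1.
have /andP[pNy1 pNy2] : -1 <= p.[- y] <= 1.
  by rewrite -ler_norml p_le1 // lerN2 lerNl y1 y2.
by rewrite ler_norml; apply/andP; split; lra.
Qed.

(* The odd part of p carries p'(0) and is a polynomial in y^2 of degree <= k, so it
   is interpolated at the squares of the k + 1 extremal nodes of T_(2k+1) in [0, 1]. *)
Lemma schur_deriv0 k (p : {poly R}) : (size p <= k.*2.+2)%N ->
  (forall u, -1 <= u <= 1 -> `|p.[u]| <= 1) -> `|p^`().[0]| <= (k.*2.+1)%:R.
Proof.
move=> sp p_le1.
pose c := cheb_node (R := R) k.*2.+1.
have c_pos (i : 'I_k.+1) : 0 < c i := cheb_node_gt0 (ltn_ord i : (i <= k)%N).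
pose x := extend_nodes (fun j => c j ^+ 2) k.
have x_decr : forall i j, (i < j)%N -> x j < x i.
  apply: extend_nodes_decr => i j /andP[ij jk].
  have cj_pos : 0 < c j := cheb_node_gt0 jk.
  have : c j < c i by apply: cheb_node_decr; rewrite ij /=; lia.
  by rewrite /=; nra.
have xE (i : 'I_k.+1) : x i = c i ^+ 2 := extend_nodesE _ (ltn_ord i : (i <= k)%N).
have odd_cheb_x (i : 'I_k.+1) : (odd_poly (cheb k.*2.+1)).[x i] * c i = (-1) ^+ i.
  have := odd_poly_hornerE (cheb k.*2.+1) (c i).
  by rewrite cheb_odd_oppr cheb_cheb_node // -xE mulr2n => ?; lra.
pose r : {poly R} := (-1) ^+ k *: odd_poly (cheb k.*2.+1).
have r0 : r.[0] = (k.*2.+1)%:R.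
  have [_ [_ T'0]] := cheb_at0 (R := R) k.
  by rewrite hornerZ -deriv0_odd_poly T'0 signrMK.
have sr : (size r <= k.+1)%N.
  exact: leq_trans (size_scale_leq _ _) (size_odd_poly_le (size_cheb _)).
rewrite deriv0_odd_poly -r0.
apply: (scalar_lagrange_bound x_decr (scalar_horner 0) (size_odd_poly_le sp) sr)
  => /= i.
  rewrite -(ler_pM2r (c_pos i)) -{1 2}(gtr0_norm (c_pos i)) -!normrM.
  rewrite hornerZ -mulrA odd_cheb_x -exprD normrX normrN1 expr1n xE.
  by apply: norm_odd_poly_sqr_le1 p_le1; rewrite cos_geN1 cos_le1.
rewrite -(pmulr_lge0 _ (c_pos i)) hornerZ mulrAC -(mulrA ((-1) ^+ k)).
rewrite odd_cheb_x -exprD; apply: lagrange_sign_left => //.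
by rewrite (xE ord_max) sqr_ge0.
Qed.

Lemma markov_segment n (h : {poly R}) c d : (0 < n)%N -> (size h <= n.+1)%N ->
  (forall t, 0 <= t <= 1 -> `|h.[c + t * d]| <= 1) ->
  `|h^`().[c]| * `|d| <= 2 * n%:R ^+ 2.
Proof.
move=> n_gt0 sh h_le1.
pose q : {poly R} := (- (d / 2))%:P * 'X + (c + d / 2)%:P.
have qE t : q.[t] = c + (1 - t) / 2 * d.
  by rewrite /q hornerMXaddC hornerC; field.
have q'E t : q^`().[t] = - (d / 2).
  by rewrite /q derivMXaddC derivC mul0r addr0 hornerC.
have size_q : (size q <= 2)%N.
  by rewrite size_MXaddC; case: ifP => // _; rewrite ltnS size_polyC leq_b1.
have size_hq : (size (h \Po q) <= n.+1)%N.
  by have := size_comp_poly_le sh size_q; rewrite muln1.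
have hq_le1 u : -1 <= u <= 1 -> `|(h \Po q).[u]| <= 1.
  move=> /andP[u1 u2]; rewrite horner_comp qE; apply: h_le1; apply/andP; split; lra.
have := markov_deriv1 n_gt0 size_hq hq_le1.
rewrite horner_comp_deriv qE q'E subrr mul0r mul0r addr0 normrM normrN normrM.
rewrite normfV (@ger0_norm _ 2) //; lra.
Qed.

Lemma schur_parabola n (h : {poly R}) c D E : (size h <= n.+1)%N ->
  (forall t, -1 <= t <= 1 -> `|h.[c + D * t + E * t ^+ 2]| <= 1) ->
  `|h^`().[c]| * `|D| <= (n.*2.+1)%:R.
Proof.
move=> sh h_le1.
pose q : {poly R} := (E%:P * 'X + D%:P) * 'X + c%:P.
have qE t : q.[t] = c + D * t + E * t ^+ 2.
  by rewrite /q !hornerMXaddC hornerC; ring.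
have q'0 : q^`().[0] = D.
  rewrite /q derivMXaddC hornerD hornerMX mulr0 addr0.
  by rewrite hornerMXaddC hornerC mulr0 add0r.
have size_q : (size q <= 3)%N.
  rewrite size_MXaddC; case: ifP => // _; rewrite ltnS size_MXaddC.
  by case: ifP => // _; rewrite ltnS size_polyC leq_b1.
have size_hq : (size (h \Po q) <= n.*2.+2)%N.
  by apply: leq_trans (size_comp_poly_le sh size_q) _; lia.
have hq_le1 u : -1 <= u <= 1 -> `|(h \Po q).[u]| <= 1.
  by move=> uI; rewrite horner_comp qE; apply: h_le1.
have := schur_deriv0 size_hq hq_le1.
by rewrite horner_comp_deriv q'0 qE mulr0 expr0n /= mulr0 !addr0 normrM.
Qed.

End MarkovSchur.

Section Parabola.
Variable R : realFieldType.

Lemma segment_mem_itv (a b c d t : R) : a <= c <= b -> a <= c + d <= b ->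
  0 <= t <= 1 -> a <= c + t * d <= b.
Proof.
move=> /andP[ac cb] /andP[acd cdb] /andP[t0 t1].
have -> : c + t * d = (1 - t) * c + t * (c + d) by ring.
by apply/andP; split; nra.
Qed.

Lemma parabola_itv_right (a b c S t : R) : a < 0 -> - a <= b -> 0 <= c <= b / 4 ->
  0 <= S -> S ^+ 2 = - a * b -> -1 <= t <= 1 ->
  a <= c + S / 2 * t + b / 8 * t ^+ 2 <= b.
Proof.
move=> a_lt0 ab /andP[c0 cb] S0 S2 /andP[t1 t2].
have b_gt0 : 0 < b by lra.
have S_le_b : S <= b by nra.
apply/andP; split.
  (* b (value - a) = b c + (b t + 2 S)^2 / 8 + S^2 / 2 *)
  rewrite -subr_ge0 -(pmulr_rge0 _ b_gt0).
  have := sqr_ge0 (b * t + 2 * S); have := mulr_ge0 (ltW b_gt0) c0.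
  have := sqr_ge0 S; lra.
have : 0 <= S * (1 - t) by apply: mulr_ge0; lra.
have : 0 <= b * ((1 - t) * (1 + t)) by rewrite !mulr_ge0 //; lra.
lra.
Qed.

Lemma parabola_itv_left (a b c S t : R) : 0 < b -> b <= - a -> 0 <= c <= b / 4 ->
  0 <= S -> S ^+ 2 = - a * b -> -1 <= t <= 1 ->
  a <= c + S / 2 * t + a / 8 * t ^+ 2 <= b.
Proof.
move=> b_gt0 ba /andP[c0 cb] S0 S2 /andP[t1 t2].
have a_lt0 : 0 < - a by lra.
have S_le_a : S <= - a by nra.
apply/andP; split; last first.
  (* - a (b - value) = - a (b/4 - c) + (a t + 2 S)^2 / 8 + S^2 / 4 *)
  rewrite -subr_ge0 -(pmulr_rge0 _ a_lt0).
  have : 0 <= - a * (b / 4 - c) by apply: mulr_ge0; lra.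
  have := sqr_ge0 (a * t + 2 * S); have := sqr_ge0 S; lra.
have : 0 <= S * (1 + t) by apply: mulr_ge0; lra.
have : 0 <= - a * ((1 - t) * (1 + t)) by rewrite !mulr_ge0 //; lra.
lra.
Qed.
End Parabola.

Lemma horner_le_deriv_bound (R : rcfType) (h : {poly R}) K x : h.[0] = 0 -> 0 <= x ->
  (forall c, 0 <= c <= x -> `|h^`().[c]| <= K) -> `|h.[x]| <= K * x.
Proof.
move=> h0 x0 h'_le; have [->|x_neq0] := eqVneq x 0; first by rewrite h0 normr0 mulr0.
have x_gt0 : 0 < x by rewrite lt_def x_neq0 x0.
have [c /[!in_itv] /andP[c0 cx] hE] := poly_mvt h x_gt0.
rewrite -[h.[x]]subr0 -h0 hE subr0 normrM (ger0_norm x0) ler_wpM2r //.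
by apply: h'_le; rewrite !ltW.
Qed.

Lemma deriv_le_markov (R : realType) L (h : {poly R}) (a b c : R) :
  (0 < L)%N -> (size h <= L)%N -> a < 0 -> 0 < b ->
  (forall y, a <= y <= b -> `|h.[y]| <= 1) -> 0 <= c <= b / 4 ->
  `|h^`().[c]| <= 8 * L%:R ^+ 2 / (b - a).
Proof.
move=> L_gt0 size_h a_lt0 b_gt0 h_le1 /andP[c0 cb].
have markov_to d : a <= c + d <= b -> `|h^`().[c]| * `|d| <= 2 * L%:R ^+ 2.
  move=> cdI; apply: (markov_segment L_gt0 (leqW size_h)) => t tI.
  by apply/h_le1/(segment_mem_itv _ cdI tI); apply/andP; split; lra.
rewrite ler_pdivlMr; last by lra.
have h'_ge0 := normr_ge0 (h^`().[c]); have L2_ge0 := sqr_ge0 (L%:R : R).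
case: (lerP (- a) b) => ab.
- have cdI : a <= c + (b - c) <= b by apply/andP; split; lra.
  have := markov_to _ cdI; rewrite (@ger0_norm _ (b - c)); last by lra.
  have : 0 <= `|h^`().[c]| * (8 / 3 * (b - c) - (b - a)) by apply: mulr_ge0; lra.
  lra.
- have cdI : a <= c + (a - c) <= b by apply/andP; split; lra.
  have := markov_to _ cdI; rewrite (@ler0_norm _ (a - c)); last by lra.
  have : 0 <= `|h^`().[c]| * (2 * (c - a) - (b - a)) by apply: mulr_ge0; lra.
  lra.
Qed.

Lemma deriv_le_schur (R : realType) L (h : {poly R}) (a b c : R) :
  (0 < L)%N -> (size h <= L)%N -> a < 0 -> 0 < b ->
  (forall y, a <= y <= b -> `|h.[y]| <= 1) -> 0 <= c <= b / 4 ->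
  `|h^`().[c]| <= 4 * L%:R / Num.sqrt `|a * b|.
Proof.
move=> L_gt0 size_h a_lt0 b_gt0 h_le1 cI.
have ab_lt0 : a * b < 0 by rewrite pmulr_llt0.
set S := Num.sqrt `|a * b|.
have S2 : S ^+ 2 = - a * b by rewrite sqr_sqrtr // ltr0_norm // mulNr.
have S_gt0 : 0 < S by rewrite sqrtr_gt0 normr_gt0 lt_eqF.
have size_h' : (size h <= L.-1.+1)%N by rewrite prednK.
have deg_le : (L.-1.*2.+1)%:R <= 2 * L%:R :> R.
  by rewrite -natrM ler_nat; lia.
have : `|h^`().[c]| * (S / 2) <= (L.-1.*2.+1)%:R.
  rewrite -[S / 2]ger0_norm; last by rewrite divr_ge0 // ltW.
  have [ab|ba] := lerP (- a) b.
  - apply: (schur_parabola (c := c) (D := S / 2) (E := b / 8) size_h') => t tI.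
    by apply: h_le1; apply: parabola_itv_right => //; exact: ltW.
  - apply: (schur_parabola (c := c) (D := S / 2) (E := a / 8) size_h') => t tI.
    by apply: h_le1; apply: parabola_itv_left => //; apply: ltW.
rewrite ler_pdivlMr //; lra.
Qed.

Lemma horner_quarter_bounds (R : realType) L (h : {poly R}) (a b x : R) :
  (0 < L)%N -> (size h <= L)%N -> h.[0] = 0 -> a < 0 -> 0 < b ->
  (forall y, a <= y <= b -> `|h.[y]| <= 1) -> a / 4 <= x <= b / 4 ->
  `|h.[x]| <= 8 * L%:R ^+ 2 / (b - a) * `|x| /\
  `|h.[x]| <= 4 * L%:R / Num.sqrt `|a * b| * `|x|.
Proof.
wlog x_ge0 : h a b x / 0 <= x => [nonneg|].
  move=> L_gt0 size_h h0 a_lt0 b_gt0 h_le1 /andP[xa xb].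
  have [x0|x_lt0] := lerP 0 x; first by apply: nonneg => //; rewrite xa xb.
  pose hN := h \Po (- 'X).
  have hNE y : hN.[y] = h.[- y] by rewrite horner_comp hornerN hornerX.
  have := nonneg hN (- b) (- a) (- x).
  rewrite !hNE !opprK normrN oppr0 [- a + b]addrC mulrNN [b * a]mulrC.
  apply => //; first by rewrite oppr_ge0 ltW.
  - by rewrite size_comp_poly2 // size_opp size_polyX.
  - by rewrite oppr_lt0.
  - by rewrite oppr_gt0.
  - move=> y /andP[y1 y2]; rewrite hNE; apply: h_le1; apply/andP; split; lra.
  - apply/andP; split; lra.
move=> L_gt0 size_h h0 a_lt0 b_gt0 h_le1 /andP[xa xb].
have c_itv c : 0 <= c <= x -> 0 <= c <= b / 4.
  by move=> /andP[c0 cx]; rewrite c0 (le_trans cx xb).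
rewrite (ger0_norm x_ge0); split; apply: horner_le_deriv_bound => // c /c_itv cI.
  exact: deriv_le_markov.
exact: deriv_le_schur.
Qed.

Theorem lemma3p13 (R : realType) (L : nat) (g : {poly R}) (a b : R) :
  (1 <= L)%N ->
  (size g <= L.+1)%N ->
  g.[0] = 0 ->
  (g^`()).[0] = 0 ->
  a < 0 -> 0 < b ->
  (forall x : R, a <= x <= b -> `|g.[x]| <= `|x|) ->
  (forall x : R, a / 4 <= x <= b / 4 ->
     `|x| <= 3 * (b - a) / (L%:R ^+ 2) ->
     `|g.[x]| <= 8 * L%:R ^+ 2 / (b - a) * x ^+ 2)
  /\
  (forall x : R, a / 4 <= x <= b / 4 ->
     `|x| <= Num.sqrt `|a * b| / (4 * L%:R) ->
     `|g.[x]| <= 4 * L%:R / Num.sqrt `|a * b| * x ^+ 2).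
Proof.
move=> L_gt0 size_g g0 g'0 a_lt0 b_gt0 g_le.
set h := drop_poly 1 g.
have gE x : g.[x] = h.[x] * x by rewrite horner_drop_poly1 g0 add0r.
have size_h : (size h <= L)%N by rewrite size_drop_poly; lia.
have h0 : h.[0] = 0.
  by move: g'0; rewrite /h !horner_coef0 coef_drop_poly coef_deriv mulr1n.
have h_le1 y : a <= y <= b -> `|h.[y]| <= 1.
  move=> yI; have [->|y_neq0] := eqVneq y 0; first by rewrite h0 normr0.
  by have := g_le y yI; rewrite gE normrM -{2}[`|y|]mul1r ler_pM2r ?normr_gt0.
have bounds := horner_quarter_bounds L_gt0 size_h h0 a_lt0 b_gt0 h_le1.
split=> x /bounds[bound1 bound2] _;
  rewrite gE normrM -(real_normK (num_real x)) [`|x| ^+ 2]expr2 mulrA.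
  exact: ler_wpM2r.
exact: ler_wpM2r.
Qed.
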